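(* Let $S$ be a finite set, let $\mathcal{G}\subseteq 2^S$ be connected, and let $\mathcal{C}\subseteq\mathcal{G}$ satisfy $|\mathcal{C}|\neq|\chi(\mathcal{C})|$. Then there exist $X,X'\in\mathcal{C}$ with $(-1)^{|X|}\neq(-1)^{|X'|}$ and a simple path $X=X_0 - X_1 - \cdots - X_{n+1}=X'$ in $G_S$ all of whose nodes lie in $\mathcal{G}$, such that $X_i\notin\mathcal{C}$ for $1\le i\le n$.
   Context: An adjacent pair of $2^S$ is a set $\{X,X\setminus\{x\}\}$ with $X\subseteq S$, $x\in X$. $G_S$ is the undirected graph on vertex set $2^S$ whose edges are the adjacent pairs; $\mathcal{G}\subseteq 2^S$ is connected if it induces a connected subgraph of $G_S$. For a family $\mathcal{D}$ of finite sets, $\chi(\mathcal{D})=\sum_{Y\in\mathcal{D}}(-1)^{|Y|}$. *)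

(* The finite ground set S is a finType T; 2^S is {set T}. *)
From mathcomp Require Import all_boot all_order all_algebra.
Set Implicit Arguments. Unset Strict Implicit. Unset Printing Implicit Defensive.
Import GRing.Theory Num.Theory.

(* {X, Y} is an adjacent pair: one is obtained from the other by removing
   one of its elements.  This is the edge relation of G_S. *)
Definition adjacent (T : finType) (X Y : {set T}) : bool :=
  [exists x, (x \in X) && (Y == X :\ x)] ||
  [exists x, (x \in Y) && (X == Y :\ x)].

Definition connected_family (T : finType) (G : {set {set T}}) : Prop :=
  forall X Y, X \in G -> Y \in G ->
    exists p : seq {set T},
      [/\ path (@adjacent T) X p, last X p = Y & all (fun Z => Z \in G) p].

Definition chi (T : finType) (D : {set {set T}}) : int :=
  (\sum_(Y in D) (-1) ^+ #|Y|)%R.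

(* If all members of C had the same parity, every term of chi(C) would have
   the same sign and |chi(C)| = |C|; so C contains sets X, X' of opposite
   parity.  Walk from X to X' inside the connected family G and list the
   members of C met along the way: since the parities at the two ends differ,
   two consecutive members of C on the walk have opposite parity, and the
   stretch of walk between them avoids C.  Removing loops from that stretch
   gives a simple path whose inner nodes still avoid C. *)
From mathcomp Require Import all_boot all_order all_algebra.
Import GRing.Theory Num.Theory.

Set Implicit Arguments.
Unset Strict Implicit.
Unset Printing Implicit Defensive.

Local Open Scope ring_scope.

Lemma normr_chi (T : finType) (D : {set {set T}}) :
  {in D &, forall X Y : {set T}, (-1) ^+ #|X| = (-1) ^+ #|Y| :> int} ->
  `|chi D| = #|D|%:Z.
Proof.
move=> same_sign; have [->|[X XD]] := set_0Vmem D.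
  by rewrite /chi big_set0 cards0.
rewrite /chi (eq_bigr (fun=> (-1) ^+ #|X|)) => [|Y YD]; last exact: same_sign YD XD.
by rewrite sumr_const normrMn normrX normrN1 expr1n natz.
Qed.

Lemma mem_behead_belast (T : eqType) (x : T) (p : seq T) :
  uniq (x :: p) -> {subset behead (belast x p) <= [predD1 p & last x p]}.
Proof.
case: p => [|y q] //; rewrite cons_uniq => /andP[_ uq] z zq.
rewrite inE (mem_belast zq) andbT /=; apply: contraTneq zq => /= ->.
by move: uq; rewrite (lastI y q) rcons_uniq => /andP[].
Qed.

Section Walks.

Variables (T : eqType) (U : eqType) (e : rel T) (C : {pred T}) (f : T -> U).

(* The C-free prefix [r] of the walk is what makes the induction go through;
   it is empty in the intended use. *)
Lemma path_colour_change (p r : seq T) (X : T) :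
    X \in C -> all (fun Z => Z \notin C) r -> path e X (r ++ p) ->
    last X (r ++ p) \in C -> f X != f (last X (r ++ p)) ->
  exists X1 q Y, [/\ X1 \in C, Y \in C & f X1 != f Y] /\
    [/\ path e X1 (rcons q Y), all (fun Z => Z \notin C) q
       & {subset X1 :: rcons q Y <= X :: r ++ p}].
Proof.
elim: p X r => [|Y p IHp] X r XC rC.
  rewrite cats0; case: r rC => [|Z r] rC _ lastC; first by rewrite eqxx.
  by have /(allP rC) := mem_last Z r; rewrite lastC.
rewrite cat_path last_cat /= => /and3P[er eY ep] lastC fXlast.
have sub_walk : {subset Y :: p <= X :: r ++ Y :: p}.
  by move=> Z ZYp; rewrite inE mem_cat ZYp !orbT.
have [YC|YnC] := boolP (Y \in C); last first.
  have := IHp X (rcons r Y) XC; rewrite -cats1 -catA all_cat rC /= YnC.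
  by rewrite cat_path last_cat er /= eY; apply.
have [fXY|fXY] := eqVneq (f X) (f Y).
  have fYlast : f Y != f (last Y p) by rewrite -fXY.
  have [X1 [q [Y1 [colours [e1 q1 sub1]]]]] := IHp Y [::] YC isT ep lastC fYlast.
  by exists X1, q, Y1; split=> //; split=> // Z /sub1; apply: sub_walk.
exists X, r, Y; split=> //; split=> //.
  by rewrite -cats1 cat_path /= er eY.
move=> Z; rewrite inE -cats1 mem_cat => /or3P[|Zr|]; first by rewrite inE => ->.
  by rewrite inE mem_cat Zr orbT.
by rewrite mem_seq1 => /eqP ->; apply/sub_walk/mem_head.
Qed.

Lemma shorten_path_avoiding (X Y : T) (q : seq T) :
    path e X (rcons q Y) -> all (fun Z => Z \notin C) q ->
  exists p, [/\ path e X p, last X p = Y, uniq (X :: p),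
    {subset X :: p <= X :: rcons q Y}
    & all (fun Z => Z \notin C) (behead (belast X p))].
Proof.
move=> eXqY qC; have := last_rcons X q Y.
case/shortenP: eXqY => p ep up sub_p lastp; exists p; split=> //.
  by move=> Z; rewrite !inE => /predU1P[-> | /sub_p ->]; rewrite ?eqxx ?orbT.
apply/allP => Z /(mem_behead_belast up); rewrite !inE => /andP[ZnY /sub_p].
by rewrite -cats1 mem_cat mem_seq1 -lastp (negPf ZnY) orbF => /(allP qC).
Qed.

End Walks.

Theorem lemma6p9 (T : finType) (G C : {set {set T}}) :
  connected_family G -> C \subset G ->
  (#|C|%:Z != `|chi C|)%R ->
  exists X X' : {set T}, exists p : seq {set T},
    [/\ X \in C, X' \in C,
        ((-1) ^+ #|X| != (-1) ^+ #|X'| :> int)%R,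
        [/\ path (@adjacent T) X p, last X p = X', uniq (X :: p)
          & all (fun Z => Z \in G) (X :: p)]
      & all (fun Z => Z \notin C) (behead (belast X p))].
Proof.
move=> connG sCG card_neq_chi.
pose sign (X : {set T}) : int := (-1) ^+ #|X|.
have [A AC [B BC sAB]] : exists2 A, A \in C & exists2 B, B \in C & sign A != sign B.
  have : ~~ [forall A in C, forall B in C, sign A == sign B].
    apply: contra card_neq_chi => /forall_inP same_sign.
    by rewrite normr_chi // => X Y XC YC; apply/eqP/(forall_inP (same_sign X XC)).
  rewrite negb_forall_in => /exists_inP[A AC]; rewrite negb_forall_in.
  by case/exists_inP => B BC sAB; exists A => //; exists B.
have [w [ew lastw wG]] := connG A B (subsetP sCG _ AC) (subsetP sCG _ BC).
rewrite -lastw in BC sAB.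
have [X [q [Y [[XC YC sXY] [eXY qC sub_w]]]]] :=
  @path_colour_change _ _ _ C sign w [::] A AC isT ew BC sAB.
have [p [ep lastp up sub_p interiorC]] := shorten_path_avoiding eXY qC.
exists X, Y, p; split=> //; split=> //.
apply/allP => Z /sub_p /sub_w; rewrite inE => /predU1P[-> |]; last exact: allP wG Z.
exact: subsetP sCG _ AC.
Qed.
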